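(* Let $\mathbf{L}\in\{\mathbf{K}_D,\mathbf{KD}_D,\mathbf{KT}_D\}$. Let $\alpha$ be a formula, let $Q\subseteq \mathsf{V}(\alpha)$ be a finite set of propositional variables and $B\subseteq \mathsf{Agt}(\alpha)$ a finite set of agent symbols. (Pre-interpolant.) There exists a formula $I_{pre}$ such that: (1) no variable of $Q$ and no agent of $B$ occurs in $I_{pre}$, i.e. $\mathsf{V}(I_{pre})\cap Q=\emptyset$ and $\mathsf{Agt}(I_{pre})\cap B=\emptyset$; (2) $I_{pre}\Rightarrow\alpha$ is derivable in $\mathsf{G}(\mathbf{L})$; (3) for every formula $\beta$ with $\mathsf{V}(\beta)\cap Q=\emptyset$ and $\mathsf{Agt}(\beta)\cap B=\emptyset$, if $\beta\Rightarrow\alpha$ is derivable in $\mathsf{G}(\mathbf{L})$ then $\beta\Rightarrow I_{pre}$ is derivable in $\mathsf{G}(\mathbf{L})$. (Post-interpolant.) There exists a formula $I_{post}$ such that: (1) $\mathsf{V}(I_{post})\cap Q=\emptyset$ and $\mathsf{Agt}(I_{post})\cap B=\emptyset$; (2) $\alpha\Rightarrow I_{post}$ is derivable in $\mathsf{G}(\mathbf{L})$; (3) for every formula $\beta$ with $\mathsf{V}(\beta)\cap Q=\emptyset$ and $\mathsf{Agt}(\beta)\cap B=\emptyset$, if $\alpha\Rightarrow\beta$ is derivable in $\mathsf{G}(\mathbf{L})$ then $I_{post}\Rightarrow\beta$ is derivable in $\mathsf{G}(\mathbf{L})$.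
   Context: Language: fix a finite nonempty set $\mathsf{Agt}$ of agent symbols and a countable set $\mathsf{Prop}$ of propositional variables; $\mathsf{Grp}$ is the set of nonempty subsets of $\mathsf{Agt}$. Formulas: $\alpha::=p\mid\bot\mid\alpha\wedge\alpha\mid\alpha\vee\alpha\mid\alpha\rightarrow\alpha\mid\neg\alpha\mid D_G\alpha$ with $p\in\mathsf{Prop}$, $G\in\mathsf{Grp}$ ($D_G$ is distributed knowledge of group $G$). $\mathsf{V}(\alpha)$ is the set of propositional variables occurring in $\alpha$; $\mathsf{Agt}(\alpha)$ is the set of agent symbols occurring in $\alpha$ (the union of all $G$ with $D_G$ occurring in $\alpha$); for multisets these are unions. An outmost-boxed formula is one of the form $D_G\gamma$. Sequent calculi: a sequent $\Gamma\Rightarrow\Delta$ is a pair of finite multisets of formulas. $\mathsf{G}(\mathbf{K}_D)$ has initial sequents $\Gamma,p\Rightarrow p,\Delta$ ($p\in\mathsf{Prop}$) and $\bot,\Gamma\Rightarrow\Delta$; the propositional rules: $(R\wedge)$ from $\Gamma\Rightarrow\Delta,\alpha_1$ and $\Gamma\Rightarrow\Delta,\alpha_2$ infer $\Gamma\Rightarrow\Delta,\alpha_1\wedge\alpha_2$; $(L\wedge)$ from $\alpha_1,\alpha_2,\Gamma\Rightarrow\Delta$ infer $\alpha_1\wedge\alpha_2,\Gamma\Rightarrow\Delta$; $(R\vee)$ from $\Gamma\Rightarrow\Delta,\alpha_1,\alpha_2$ infer $\Gamma\Rightarrow\Delta,\alpha_1\vee\alpha_2$; $(L\vee)$ from $\alpha_1,\Gamma\Rightarrow\Delta$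 and $\alpha_2,\Gamma\Rightarrow\Delta$ infer $\alpha_1\vee\alpha_2,\Gamma\Rightarrow\Delta$; $(R\rightarrow)$ from $\alpha_1,\Gamma\Rightarrow\Delta,\alpha_2$ infer $\Gamma\Rightarrow\Delta,\alpha_1\rightarrow\alpha_2$; $(L\rightarrow)$ from $\Gamma\Rightarrow\Delta,\alpha_1$ and $\alpha_2,\Gamma\Rightarrow\Delta$ infer $\alpha_1\rightarrow\alpha_2,\Gamma\Rightarrow\Delta$; $(R\neg)$ from $\alpha,\Gamma\Rightarrow\Delta$ infer $\Gamma\Rightarrow\Delta,\neg\alpha$; $(L\neg)$ from $\Gamma\Rightarrow\Delta,\alpha$ infer $\neg\alpha,\Gamma\Rightarrow\Delta$; and the modal rule $(D_K)$: from $\alpha_1,\dots,\alpha_n\Rightarrow\beta$ ($n\ge 0$) infer $\Sigma,D_{G_1}\alpha_1,\dots,D_{G_n}\alpha_n\Rightarrow D_G\beta,\Omega$, provided $G_i\subseteq G$ for all $i$, $\Sigma$ consists only of propositional variables, $\bot$, and formulas $D_H\gamma$ with $H\not\subseteq G$, and $\Omega$ consists only of propositional variables, $\bot$ and outmost-boxed formulas. $\mathsf{G}(\mathbf{KD}_D)$ adds $(D_D)$: from $\Gamma\Rightarrow$ (empty succedent) with $\Gamma$ nonempty infer $\Sigma,D_{\{a\}}\Gamma\Rightarrow\Omega$ (where $a\in\mathsf{Agt}$, $D_{\{a\}}\Gamma=\{D_{\{a\}}\gamma:\gamma\in\Gamma\}$), provided $\Sigma$ consists only of propositional variables, $\bot$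 and formulas $D_H\gamma$ with $H\neq\{a\}$, and $\Omega$ only of propositional variables, $\bot$ and outmost-boxed formulas. $\mathsf{G}(\mathbf{KT}_D)$ adds to $\mathsf{G}(\mathbf{K}_D)$ the rule $(D_T)$: from $D_G\alpha,\alpha,\Gamma\Rightarrow\Delta$ infer $D_G\alpha,\Gamma\Rightarrow\Delta$. A sequent is derivable if it is the root of a finite tree built from initial sequents by these rules. *)

From Stdlib Require Import Permutation.
From mathcomp Require Import all_boot.
Set Implicit Arguments.
Unset Strict Implicit.
Unset Printing Implicit Defensive.

Definition grp (A : finType) := {G : {set A} | G != set0}.

Inductive form (A : finType) : Type :=
| Var : nat -> form A
| Bot : form A
| And : form A -> form A -> form A
| Or  : form A -> form A -> form A
| Imp : form A -> form A -> form A
| Neg : form A -> form A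
| Box : grp A -> form A -> form A.

Arguments Bot {A}.

Fixpoint vars (A : finType) (f : form A) : seq nat :=
  match f with
  | Var p => [:: p]
  | Bot => [::]
  | And a b | Or a b | Imp a b => vars a ++ vars b
  | Neg a => vars a
  | Box _ a => vars a
  end.

Fixpoint agts (A : finType) (f : form A) : {set A} :=
  match f with
  | Var _ | Bot => set0
  | And a b | Or a b | Imp a b => agts a :|: agts b
  | Neg a => agts a
  | Box G a => val G :|: agts a
  end.

Inductive logic := LK | LKD | LKT.

Definition sigmaK (A : finType) (G : {set A}) (f : form A) : Prop :=
  match f with
  | Var _ | Bot => True
  | Box H _ => ~~ (val H \subset G)
  | _ => False
  end.

Definition sigmaD (A : finType) (a : A) (f : form A) : Prop :=
  match f with
  | Var _ | Bot => True
  | Box H _ => val H != [set a]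
  | _ => False
  end.

Definition omegaOK (A : finType) (f : form A) : Prop :=
  match f with
  | Var _ | Bot | Box _ _ => True
  | _ => False
  end.

(* Sequents Gamma => Delta: pairs of finite multisets, represented as lists
   taken up to permutation (rule [Exch]). *)
Inductive derivable (A : finType) (L : logic) : seq (form A) -> seq (form A) -> Prop :=
| Exch G D G' D' : derivable L G D -> Permutation G G' -> Permutation D D' ->
    derivable L G' D'
| Init p G D : derivable L (Var A p :: G) (Var A p :: D)
| BotL G D : derivable L (Bot :: G) D
| RAnd G D a1 a2 : derivable L G (a1 :: D) -> derivable L G (a2 :: D) ->
    derivable L G (And a1 a2 :: D)
| LAnd G D a1 a2 : derivable L (a1 :: a2 :: G) D -> derivable L (And a1 a2 :: G) D
| ROr G D a1 a2 : derivable L G (a1 :: a2 :: D) -> derivable L G (Or a1 a2 :: D)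
| LOr G D a1 a2 : derivable L (a1 :: G) D -> derivable L (a2 :: G) D ->
    derivable L (Or a1 a2 :: G) D
| RImp G D a1 a2 : derivable L (a1 :: G) (a2 :: D) -> derivable L G (Imp a1 a2 :: D)
| LImp G D a1 a2 : derivable L G (a1 :: D) -> derivable L (a2 :: G) D ->
    derivable L (Imp a1 a2 :: G) D
| RNeg G D a : derivable L (a :: G) D -> derivable L G (Neg a :: D)
| LNeg G D a : derivable L G (a :: D) -> derivable L (Neg a :: G) D
| DK (ps : seq (grp A * form A)) (G : grp A) (b : form A) Sig Om :
    derivable L [seq p.2 | p <- ps] [:: b] ->
    (forall p, List.In p ps -> val p.1 \subset val G) ->
    (forall f, List.In f Sig -> sigmaK (val G) f) ->
    (forall f, List.In f Om -> omegaOK f) ->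
    derivable L (Sig ++ [seq Box p.1 p.2 | p <- ps]) (Box G b :: Om)
| DD (a : A) (Ga : grp A) (Gm : seq (form A)) Sig Om :
    L = LKD -> val Ga = [set a] -> Gm <> [::] ->
    derivable L Gm [::] ->
    (forall f, List.In f Sig -> sigmaD a f) ->
    (forall f, List.In f Om -> omegaOK f) ->
    derivable L (Sig ++ [seq Box Ga g | g <- Gm]) Om
| DT G D (H : grp A) a : L = LKT ->
    derivable L (Box H a :: a :: G) D -> derivable L (Box H a :: G) D.

Definition avoids (A : finType) (Q : seq nat) (B : {set A}) (f : form A) : Prop :=
  (forall q, q \in Q -> q \notin vars f) /\ [disjoint agts f & B].

(* Uniform interpolants are built semantically, over Kripke models in which
   [D_G] quantifies over the common successors of all agents of [G].  Maehara's
   method, run along a derivation, gives every derivable [alpha => beta] a Craig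
   interpolant in the common vocabulary whose modal depth is at most that of
   [alpha]; with an empty right-hand side it also yields soundness.  A saturation
   argument, gluing countermodels of the modal premises below a fresh root, gives
   completeness.  Up to equivalence there are only finitely many formulas of
   bounded modal depth over a finite vocabulary, so the conjunction of all those
   that follow from [alpha] and avoid [Q] and [B] is a post-interpolant: when
   [alpha] entails such a [beta], it does so through its Craig interpolant, which
   is one of them.  The pre-interpolant of [alpha] is the negation of the
   post-interpolant of [~ alpha]. *)

From Stdlib Require Import Permutation List Classical.
From mathcomp Require Import all_boot zify.
Set Implicit Arguments.
Unset Strict Implicit.
Unset Printing Implicit Defensive.

Section ListFacts.
Variable T : Type.
Implicit Types (x : T) (l s : seq T).

Lemma In_filter (p : pred T) x s : List.In x (filter p s) <-> List.In x s /\ p x.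
Proof.
elim: s => [|y s IH] /=; first by split=> // [[]].
case: ifP => hy /=; rewrite IH; split.
- by case=> [<-|[]]; auto.
- by case=> [[<-|h] hp]; auto.
- by move=> [h hp]; auto.
- by case=> [[<-|h] hp]; [rewrite hy in hp|auto].
Qed.

Lemma Permutation_filterC (p : pred T) s :
  Permutation s (filter p s ++ filter (predC p) s).
Proof.
elim: s => [|x s IH] //=; case: (p x) => /=; first exact: perm_skip.
apply: Permutation_trans (perm_skip x IH) _; exact: Permutation_middle.
Qed.

Lemma Permutation_middle_front x l1 l2 : Permutation (l1 ++ x :: l2) (x :: l1 ++ l2).
Proof. exact: Permutation_sym (Permutation_middle _ _ _). Qed.

Lemma In_Permutation x l : List.In x l -> exists l', Permutation l (x :: l').
Proof.
move=> /(in_split x l) [l1 [l2 ->]]; exists (l1 ++ l2).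
exact: Permutation_middle_front.
Qed.

Lemma Permutation_cons_In x l l' : Permutation l (x :: l') -> List.In x l.
Proof. by move=> /Permutation_sym h; apply: (Permutation_in x h); left. Qed.

Lemma Permutation_cons_app_split x l l1 l2 :
  Permutation (x :: l) (l1 ++ l2) ->
  (exists l1', Permutation l1 (x :: l1') /\ Permutation l (l1' ++ l2)) \/
  (exists l2', Permutation l2 (x :: l2') /\ Permutation l (l1 ++ l2')).
Proof.
move=> hp; have := Permutation_in x hp (in_eq x l).
case/(in_app_or l1 l2) => /(in_split x) [a [b e]].
- left; exists (a ++ b); split; first by rewrite e; exact: Permutation_middle_front.
  apply: (@Permutation_cons_inv _ _ _ x); apply: (Permutation_trans hp).
  by rewrite e -!catA; exact: Permutation_middle_front.
- right; exists (a ++ b); split; first by rewrite e; exact: Permutation_middle_front.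
  apply: (@Permutation_cons_inv _ _ _ x); apply: (Permutation_trans hp).
  by rewrite e !catA; exact: Permutation_middle_front.
Qed.

Lemma Permutation_app_app_split l m G1 G2 :
  Permutation (l ++ m) (G1 ++ G2) ->
  exists l1 l2 m1 m2, [/\ Permutation l (l1 ++ l2), Permutation m (m1 ++ m2),
    Permutation G1 (l1 ++ m1) & Permutation G2 (l2 ++ m2)].
Proof.
elim: l G1 G2 => [|x l IH] G1 G2 /= hp; first by exists [::], [::], G1, G2.
case: (Permutation_cons_app_split hp) => [[G1' [h1 h2]]|[G2' [h1 h2]]];
  have [l1 [l2 [m1 [m2 [a b c d]]]]] := IH _ _ h2.
- exists (x :: l1), l2, m1, m2; split=> //; first exact: perm_skip.
  exact: Permutation_trans h1 (perm_skip x c).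
- exists l1, (x :: l2), m1, m2; split=> //.
    exact: Permutation_trans (perm_skip x a) (Permutation_middle _ _ _).
  exact: Permutation_trans h1 (perm_skip x d).
Qed.

Lemma Permutation_app_front p l l1 l2 :
  Permutation l (l1 ++ l2) -> Permutation (p ++ l) ((p ++ l1) ++ l2).
Proof. by move=> h; rewrite -catA; apply: Permutation_app_head. Qed.

Lemma Permutation_app_inner p l l1 l2 :
  Permutation l (l1 ++ l2) -> Permutation (p ++ l) (l1 ++ (p ++ l2)).
Proof.
move=> h; apply: Permutation_trans (Permutation_app_head p h) _.
exact: Permutation_app_swap_app.
Qed.

End ListFacts.

Lemma list_choice (T U : Type) (R : T -> U -> Prop) (l : seq T) :
  (forall x, List.In x l -> exists y, R x y) ->
  exists l', (forall x, List.In x l -> exists2 y, List.In y l' & R x y) /\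
             (forall y, List.In y l' -> exists2 x, List.In x l & R x y).
Proof.
elim: l => [|x l IH] h; first by exists [::].
have [y hy] := h x (or_introl erefl).
have [l' [h1 h2]] := IH (fun z hz => h z (or_intror hz)).
exists (y :: l'); split.
- move=> z [<-|/h1 [y' hy' hz]]; first by exists y; first left.
  by exists y'; first right.
- move=> y' [<-|/h2 [z hz hy']]; first by exists x; first left.
  by exists z; first right.
Qed.

Lemma Permutation_map_app_split (T U : Type) (f : T -> U) ps m1 m2 :
  Permutation (map f ps) (m1 ++ m2) ->
  exists ps1 ps2, [/\ Permutation ps (ps1 ++ ps2), m1 = map f ps1 & m2 = map f ps2].
Proof.
move=> /Permutation_sym /Permutation_map_inv [l [e hp]].
have [a [b [el [<- <-]]]] := map_eq_app _ _ _ _ (esym e).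
by exists a, b; split=> //; move: hp; rewrite el.
Qed.

Lemma exists_filter (T : Type) (P : T -> Prop) (l : seq T) :
  exists l', forall x, List.In x l' <-> List.In x l /\ P x.
Proof.
elim: l => [|y l [l' h]]; first by exists [::] => x; split=> // [[]].
case: (classic (P y)) => hy; [exists (y :: l') | exists l'] => x /=; rewrite h.
- by split; [case=> [<-|[]]; auto | case=> [[<-|hx] hp]; auto].
- by split; [case; auto | case=> [[<-|hx] hp]; auto].
Qed.

Lemma In_flatten (T : Type) (x : T) (ss : seq (seq T)) :
  List.In x (flatten ss) <-> exists2 s, List.In s ss & List.In x s.
Proof.
elim: ss => [|s ss IH] /=; first by split=> // [[]].
rewrite in_app_iff IH; split.
- by case=> [h|[t h1 h2]]; [exists s|exists t]; auto.
- by case=> t [<-|h1] h2; [left|right; exists t].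
Qed.

Lemma InP (T : eqType) (x : T) (s : seq T) : reflect (List.In x s) (x \in s).
Proof.
elim: s => [|y s IH] /=; first exact: ReflectF.
by rewrite in_cons; apply: (iffP orP) => [[/eqP ->|/IH]|[->|/IH]]; auto.
Qed.

(** * Kripke semantics *)

Section Semantics.
Variable A : finType.
Implicit Types (f : form A) (G D l : seq (form A)).

(* Worlds are sequences of naturals, so that countermodels can be glued
   below a fresh root [[::]] as the copies [k :: w]. *)
Record model := Model { Rel : A -> seq nat -> seq nat -> Prop; Val : nat -> seq nat -> Prop }.

Definition drel (M : model) (S : {set A}) w v := forall a, a \in S -> Rel M a w v.

Fixpoint sat (M : model) w f : Prop :=
  match f with
  | Var p => Val M p w
  | Bot => False
  | And a b => sat M w a /\ sat M w b
  | Or a b => sat M w a \/ sat M w b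
  | Imp a b => sat M w a -> sat M w b
  | Neg a => ~ sat M w a
  | Box H a => forall v, drel M (val H) w v -> sat M v a
  end.

Definition frame (L : logic) (M : model) : Prop :=
  match L with
  | LK => True
  | LKD => forall a w, exists v, Rel M a w v
  | LKT => forall a w, Rel M a w w
  end.

Fixpoint sat_all (M : model) w l : Prop :=
  if l is f :: l then sat M w f /\ sat_all M w l else True.
Fixpoint sat_some (M : model) w l : Prop :=
  if l is f :: l then sat M w f \/ sat_some M w l else False.

Definition falsified (M : model) w G D := sat_all M w G /\ ~ sat_some M w D.

Definition valid L G D := forall M w, frame L M -> sat_all M w G -> sat_some M w D.

Lemma drel_sub (M : model) (S S' : {set A}) w v :
  S' \subset S -> drel M S w v -> drel M S' w v.
Proof. by move=> /subsetP hs h a /hs; apply: h. Qed.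

Lemma sat_allP (M : model) w l : sat_all M w l <-> forall f, List.In f l -> sat M w f.
Proof.
elim: l => [|f l IH] /=; first by split.
rewrite IH; split; first by move=> [h1 h2] g [<-|]; auto.
by move=> h; split; auto.
Qed.

Lemma sat_someP (M : model) w l : sat_some M w l <-> exists2 f, List.In f l & sat M w f.
Proof.
elim: l => [|f l IH] /=; first by split=> // [[]].
rewrite IH; split.
- by case=> [h|[g h1 h2]]; [exists f|exists g]; auto.
- by case=> g [<-|h1] h2; [left|right; exists g].
Qed.

Lemma sat_all_cat (M : model) w l l' : sat_all M w (l ++ l') <-> sat_all M w l /\ sat_all M w l'.
Proof. by elim: l => [|f l IH] /=; [tauto | rewrite IH; tauto]. Qed.

Lemma sat_some_cat (M : model) w l l' :
  sat_some M w (l ++ l') <-> sat_some M w l \/ sat_some M w l'.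
Proof. by elim: l => [|f l IH] /=; [tauto | rewrite IH; tauto]. Qed.

Lemma falsified_cat (M : model) w G G' D D' :
  falsified M w (G ++ G') (D ++ D') <-> falsified M w G D /\ falsified M w G' D'.
Proof. by rewrite /falsified sat_all_cat sat_some_cat; tauto. Qed.

Lemma sat_all_perm (M : model) w l l' : Permutation l l' -> sat_all M w l -> sat_all M w l'.
Proof.
by move=> hp; rewrite !sat_allP => h f /(Permutation_in f (Permutation_sym hp)); apply: h.
Qed.

Lemma sat_some_perm (M : model) w l l' : Permutation l l' -> sat_some M w l -> sat_some M w l'.
Proof. by move=> hp; rewrite !sat_someP => -[f /(Permutation_in f hp)]; exists f. Qed.

Lemma valid_perm L G G' D D' : Permutation G G' -> Permutation D D' -> valid L G D -> valid L G' D'.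
Proof.
move=> hG hD v M w hM /(sat_all_perm (Permutation_sym hG)) /(v M w hM).
exact: sat_some_perm.
Qed.

End Semantics.

Section Language.
Variable A : finType.
Implicit Types (f : form A) (l : seq (form A)).

Fixpoint depth f : nat :=
  match f with
  | Var _ | Bot => 0
  | And a b | Or a b | Imp a b => maxn (depth a) (depth b)
  | Neg a => depth a
  | Box _ a => (depth a).+1
  end.

Definition Top : form A := Neg Bot.

Definition mdepth l := foldr (fun f m => maxn (depth f) m) 0 l.
Definition vars_seq l := foldr (fun f s => vars f ++ s) [::] l.
Definition agts_seq l := foldr (fun f S => agts f :|: S) set0 l.

Lemma mdepth_cat l l' : mdepth (l ++ l') = maxn (mdepth l) (mdepth l').
Proof. by elim: l => [|f l IH] /=; [rewrite max0n | rewrite IH maxnA]. Qed.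

Lemma vars_seq_cat l l' : vars_seq (l ++ l') = vars_seq l ++ vars_seq l'.
Proof. by elim: l => [|f l IH] //=; rewrite IH catA. Qed.

Lemma agts_seq_cat l l' : agts_seq (l ++ l') = agts_seq l :|: agts_seq l'.
Proof. by elim: l => [|f l IH] /=; [rewrite set0U | rewrite IH setUA]. Qed.

Lemma mdepth_In f l : List.In f l -> depth f <= mdepth l.
Proof. by elim: l => [|g l IH] //= [->|/IH]; lia. Qed.

Lemma mdepth_lt l d : (forall f, List.In f l -> depth f < d) -> l <> [::] -> mdepth l < d.
Proof.
elim: l => [|g l IH] // h _ /=; have hg : depth g < d by apply: h; left.
rewrite gtn_max hg /=; case: l IH h => [|g' l] IH h; first exact: leq_ltn_trans hg.
by apply: IH => // f hf; apply: h; right.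
Qed.

Lemma mdepth_perm l l' : Permutation l l' -> mdepth l = mdepth l'.
Proof. by elim=> //= [x l1 l2 _ ->|x y l0|l1 l2 l3 _ -> _ ->] //; lia. Qed.

Lemma vars_seq_perm l l' : Permutation l l' -> vars_seq l =i vars_seq l'.
Proof.
elim=> //= [x l1 l2 _ h|x y l0|l1 l2 l3 _ h1 _ h2] z; rewrite ?mem_cat ?h //.
- by case: (z \in vars x); case: (z \in vars y).
- by rewrite h1 h2.
Qed.

Lemma agts_seq_perm l l' : Permutation l l' -> agts_seq l = agts_seq l'.
Proof.
by elim=> //= [x l1 l2 _ ->|x y l0|l1 l2 l3 _ -> _ ->] //; rewrite setUCA. Qed.
End Language.

Section Boxes.
Variable A : finType.
Implicit Types (ps : seq (grp A * form A)) (l : seq (form A)).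

Definition boxes ps := [seq Box p.1 p.2 | p <- ps].
Definition bodies ps := [seq p.2 | p <- ps].
Definition groups ps : {set A} := foldr (fun p S => val p.1 :|: S) set0 ps.

Lemma grp_neq0 (H : grp A) : exists a, a \in val H.
Proof. by case: H => H /= /set0Pn. Qed.

Lemma groups_cons_neq0 p ps : groups (p :: ps) != set0.
Proof. by have [a ha] := grp_neq0 p.1; apply/set0Pn; exists a; rewrite inE ha. Qed.

Lemma groups_In p ps : List.In p ps -> val p.1 \subset groups ps.
Proof.
elim: ps => [|q ps IH] //= [->|/IH h]; first exact: subsetUl.
exact: subset_trans h (subsetUr _ _).
Qed.

Lemma groups_sub ps (S : {set A}) :
  (forall p, List.In p ps -> val p.1 \subset S) -> groups ps \subset S.
Proof.
elim: ps => [|q ps IH] h /=; first exact: sub0set.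
rewrite subUset h /=; last by left.
by apply: IH => p hp; apply: h; right.
Qed.

Lemma groups_sub_agts ps : groups ps \subset agts_seq (boxes ps).
Proof.
elim: ps => [|q ps IH] /=; first exact: sub0set.
by rewrite -setUA setUS // (subset_trans IH) ?subsetUr.
Qed.

Lemma sat_bodies (M : model A) w v ps (S : {set A}) :
  sat_all M w (boxes ps) -> (forall p, List.In p ps -> val p.1 \subset S) ->
  drel M S w v -> sat_all M v (bodies ps).
Proof.
elim: ps => [|q ps IH] //= [hq hr] hS hR; split; last by apply: IH => // p hp; apply: hS; right.
by apply: hq; apply: drel_sub hR; apply: hS; left.
Qed.

Lemma mdepth_boxes ps : mdepth (boxes ps) = if ps is [::] then 0 else (mdepth (bodies ps)).+1.
Proof. by elim: ps => [|q ps IH] //=; rewrite IH; case: ps {IH} => [|r ps] /=; lia. Qed.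

Lemma boxes_pair (H : grp A) l : boxes [seq (H, g) | g <- l] = [seq Box H g | g <- l].
Proof. by elim: l => //= g l ->. Qed.

Lemma bodies_pair (H : grp A) l : bodies [seq (H, g) | g <- l] = l.
Proof. by elim: l => //= g l ->. Qed.

End Boxes.

Section Validity.
Variables (A : finType) (L : logic).
Implicit Types (f : form A) (G D S l : seq (form A)).

Lemma valid_cut G D f : valid L G (f :: D) -> valid L (f :: G) D -> valid L G D.
Proof. by move=> v1 v2 M w hM hG; case: (v1 M w hM hG) => // hf; exact: v2. Qed.

Lemma valid_NegL G D f : valid L G (f :: D) -> valid L (Neg f :: G) D.
Proof. by move=> v M w hM [hf hG]; case: (v M w hM hG). Qed.

Lemma valid_NegR G D f : valid L (f :: G) D -> valid L G (Neg f :: D).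
Proof. by move=> v M w hM hG; case: (classic (sat M w f)) => hf; [right; exact: v | left]. Qed.

Lemma valid_incl G D G' D' : incl G G' -> incl D D' -> valid L G D -> valid L G' D'.
Proof.
move=> hG hD v M w hM hall.
have /sat_someP [f /hD hf sf] : sat_some M w D.
  by apply: v => //; apply/sat_allP => f /hG; move/sat_allP: hall; apply.
by apply/sat_someP; exists f.
Qed.

Lemma valid_In G D f : List.In f G -> List.In f D -> valid L G D.
Proof. by move=> hG hD M w _ /sat_allP /(_ f hG) hf; apply/sat_someP; exists f. Qed.

Lemma valid_Bot G D : List.In Bot G -> valid L G D.
Proof. by move=> hG M w _ /sat_allP /(_ _ hG). Qed.

Lemma valid_K ps (G : grp A) b S D :
  valid L (bodies ps) [:: b] -> (forall p, List.In p ps -> val p.1 \subset val G) ->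
  valid L (S ++ boxes ps) (Box G b :: D).
Proof.
move=> v hps M w hM /sat_all_cat [_ hB]; left => u hu.
by case: (v M u hM (sat_bodies hB hps hu)).
Qed.

Lemma valid_D a (H : grp A) Gm S D :
  L = LKD -> val H = [set a] -> valid L Gm [::] -> valid L (S ++ [seq Box H g | g <- Gm]) D.
Proof.
move=> hL hH v M w hM /sat_all_cat [_]; rewrite -boxes_pair => hB.
have [u hu] : exists u, drel M (val H) w u.
  by move: hM; rewrite hL => /(_ a w) [u hu]; exists u => y; rewrite hH inE => /eqP ->.
have hGm : sat_all M u Gm.
  rewrite -(bodies_pair H Gm); apply: sat_bodies hB _ hu => p /in_map_iff [g [<- _]].
  exact: subxx.
by case: (v M u hM hGm).
Qed.

End Validity.

(** * Craig interpolation and soundness *)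

Section Sublanguage.
Variable A : finType.
Implicit Types (I f : form A) (l : seq (form A)).

Definition in_lang I l := {subset vars I <= vars_seq l} /\ agts I \subset agts_seq l.

Definition sublang l l' :=
  [/\ {subset vars_seq l <= vars_seq l'}, agts_seq l \subset agts_seq l' & mdepth l <= mdepth l'].

Lemma in_lang_sub I l l' : in_lang I l -> sublang l l' -> in_lang I l'.
Proof. by move=> [hv ha] [sv sa _]; split; [move=> x /hv /sv | exact: subset_trans sa]. Qed.

Lemma in_lang_In f l : List.In f l -> in_lang f l.
Proof.
elim: l => [|g l IH] //= [->|/IH [hv ha]]; split.
- by move=> x hx; rewrite mem_cat hx.
- exact: subsetUl.
- by move=> x /hv hx; rewrite mem_cat hx orbT.
- exact: subset_trans ha (subsetUr _ _).
Qed.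

Lemma in_lang_const I l : vars I = [::] -> agts I = set0 -> in_lang I l.
Proof. by rewrite /in_lang => -> ->; split; [|exact: sub0set]. Qed.

Lemma in_lang2 I I1 I2 l :
  vars I = vars I1 ++ vars I2 -> agts I = agts I1 :|: agts I2 ->
  in_lang I1 l -> in_lang I2 l -> in_lang I l.
Proof.
rewrite /in_lang => -> -> [v1 a1] [v2 a2]; split; last by rewrite subUset a1 a2.
by move=> x; rewrite mem_cat => /orP [/v1|/v2].
Qed.

Lemma in_lang_Box (H : grp A) I l : in_lang I l -> val H \subset agts_seq l -> in_lang (Box H I) l.
Proof. by move=> [hv ha] hH; split=> //=; rewrite subUset hH ha. Qed.

Lemma sublang_perm l l' : Permutation l l' -> sublang l l'.
Proof.
move=> h; split; last by rewrite (mdepth_perm h).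
- by move=> x; rewrite (vars_seq_perm h).
- by rewrite (agts_seq_perm h).
Qed.

Lemma sublang_trans l1 l2 l3 : sublang l1 l2 -> sublang l2 l3 -> sublang l1 l3.
Proof.
move=> [a1 b1 c1] [a2 b2 c2]; split; [by move=> x /a1 /a2 | exact: subset_trans b2 | lia].
Qed.

Lemma sublang_frame pG pD cG cD G D :
  sublang (pG ++ pD) (cG ++ cD) -> sublang ((pG ++ G) ++ pD ++ D) ((cG ++ G) ++ cD ++ D).
Proof.
move=> [hv ha hd]; split.
- move=> x; apply/implyP; move/implyP: (hv x); rewrite !vars_seq_cat !mem_cat.
  by do ! case: (x \in _).
- apply/subsetP => x; apply/implyP; move/subsetP/(_ x)/implyP: ha; rewrite !agts_seq_cat !inE.
  by do ! case: (x \in _).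
- by move: hd; rewrite !mdepth_cat; lia.
Qed.

Lemma sublang_bodies ps l : sublang (bodies ps ++ l) (boxes ps ++ l).
Proof.
split.
- rewrite !vars_seq_cat.
  by have -> : vars_seq (boxes ps) = vars_seq (bodies ps) by elim: ps => //= q ps ->.
- rewrite !agts_seq_cat setSU //; elim: ps => [|q ps IH] /=; first exact: sub0set.
  by rewrite -setUA (subset_trans _ (subsetUr _ _)) // setUS.
- by rewrite !mdepth_cat mdepth_boxes; case: ps => [|q ps] //=; lia.
Qed.

End Sublanguage.

Ltac solve_sublang :=
  split;
  [ let x := fresh "x" in let hx := fresh "hx" in
    move=> x; rewrite ?vars_seq_cat /= ?vars_seq_cat ?mem_cat ?in_nil ?orbF => hx;
    repeat case/orP: hx => hx; by rewrite ?hx ?orbT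
  | let x := fresh "x" in let hx := fresh "hx" in
    apply/subsetP => x; rewrite ?agts_seq_cat /= ?agts_seq_cat !inE ?orbF => hx;
    repeat case/orP: hx => hx; by rewrite ?hx ?orbT
  | rewrite ?mdepth_cat /= ?mdepth_cat; lia ].

Section Interpolation.
Variables (A : finType) (L : logic).
Implicit Types (I J f : form A) (G D S l : seq (form A)) (ps : seq (grp A * form A)).

(* The depth bound is what makes uniform interpolants finite conjunctions. *)
Definition interpolant I G1 D1 G2 D2 :=
  [/\ valid L G1 (I :: D1), valid L (I :: G2) D2, in_lang I (G1 ++ D1),
      in_lang I (G2 ++ D2) & depth I <= mdepth (G1 ++ D1)].

Definition has_interpolant G D := forall G1 G2 D1 D2,
  Permutation G (G1 ++ G2) -> Permutation D (D1 ++ D2) -> exists I, interpolant I G1 D1 G2 D2.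

Lemma interpolant_perm I G1 D1 G2 D2 G1' D1' G2' D2' :
  Permutation G1 G1' -> Permutation D1 D1' -> Permutation G2 G2' -> Permutation D2 D2' ->
  interpolant I G1 D1 G2 D2 -> interpolant I G1' D1' G2' D2'.
Proof.
move=> p1 p2 p3 p4 [v1 v2 l1 l2 d]; split.
- exact: valid_perm p1 (perm_skip I p2) v1.
- exact: valid_perm (perm_skip I p3) p4 v2.
- by apply: in_lang_sub l1 _; apply: sublang_perm; apply: Permutation_app.
- by apply: in_lang_sub l2 _; apply: sublang_perm; apply: Permutation_app.
- by rewrite -(mdepth_perm (Permutation_app p1 p2)).
Qed.

Lemma interpolant_Bot G1 D1 G2 D2 : valid L G1 D1 -> interpolant Bot G1 D1 G2 D2.
Proof.
move=> v; split=> //; try exact: in_lang_const.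
- by move=> M w hM /(v M w hM); right.
- by move=> M w hM [].
Qed.

Lemma interpolant_Top G1 D1 G2 D2 : valid L G2 D2 -> interpolant (Top A) G1 D1 G2 D2.
Proof.
move=> v; split=> //; try exact: in_lang_const.
- by move=> M w hM _; left.
- by move=> M w hM [_ /(v M w hM)].
Qed.

Definition invertible (cG cD pG1 pD1 pG2 pD2 : seq (form A)) := forall M w, frame L M ->
  falsified M w cG cD -> falsified M w pG1 pD1 \/ falsified M w pG2 pD2.

Lemma interpolant_Or I1 I2 cG cD pG1 pD1 pG2 pD2 G1 D1 G2 D2 :
  invertible cG cD pG1 pD1 pG2 pD2 ->
  sublang (pG1 ++ pD1) (cG ++ cD) -> sublang (pG2 ++ pD2) (cG ++ cD) ->
  interpolant I1 (pG1 ++ G1) (pD1 ++ D1) G2 D2 -> interpolant I2 (pG2 ++ G1) (pD2 ++ D1) G2 D2 ->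
  interpolant (Or I1 I2) (cG ++ G1) (cD ++ D1) G2 D2.
Proof.
move=> hinv /(sublang_frame G1 D1) s1 /(sublang_frame G1 D1) s2 [v1 w1 l1 m1 d1] [v2 w2 l2 m2 d2].
split.
- move=> M w hM hG; case: (classic (sat_some M w (cD ++ D1))) => [|hD]; first by right.
  have [/hinv -/(_ hM) hp hc] : falsified M w cG cD /\ falsified M w G1 D1.
    by apply/falsified_cat; split.
  case: hp => hp.
  + have [hG' hD'] : falsified M w (pG1 ++ G1) (pD1 ++ D1) by apply/falsified_cat.
    by case: (v1 M w hM hG') => // hI; left; left.
  + have [hG' hD'] : falsified M w (pG2 ++ G1) (pD2 ++ D1) by apply/falsified_cat.
    by case: (v2 M w hM hG') => // hI; left; right.
- by move=> M w hM [[hI|hI] hG]; [exact: w1 | exact: w2].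
- by apply: in_lang2 (in_lang_sub l1 s1) (in_lang_sub l2 s2).
- exact: in_lang2 m1 m2.
- by case: s1 => _ _ e1; case: s2 => _ _ e2 /=; lia.
Qed.

Lemma interpolant_And I1 I2 cG cD pG1 pD1 pG2 pD2 G1 D1 G2 D2 :
  invertible cG cD pG1 pD1 pG2 pD2 ->
  sublang (pG1 ++ pD1) (cG ++ cD) -> sublang (pG2 ++ pD2) (cG ++ cD) ->
  interpolant I1 G1 D1 (pG1 ++ G2) (pD1 ++ D2) -> interpolant I2 G1 D1 (pG2 ++ G2) (pD2 ++ D2) ->
  interpolant (And I1 I2) G1 D1 (cG ++ G2) (cD ++ D2).
Proof.
move=> hinv /(sublang_frame G2 D2) s1 /(sublang_frame G2 D2) s2 [v1 w1 l1 m1 d1] [v2 w2 l2 m2 d2].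
split.
- move=> M w hM hG; case: (v1 M w hM hG) => [h1|]; last by right.
  by case: (v2 M w hM hG) => [h2|]; [left | right].
- move=> M w hM [[h1 h2] hG]; apply: NNPP => hD.
  have [/hinv -/(_ hM) hp hc] : falsified M w cG cD /\ falsified M w G2 D2 by apply/falsified_cat.
  case: hp => hp.
  + have [hG' hD'] : falsified M w (pG1 ++ G2) (pD1 ++ D2) by apply/falsified_cat.
    exact: hD' (w1 M w hM (conj h1 hG')).
  + have [hG' hD'] : falsified M w (pG2 ++ G2) (pD2 ++ D2) by apply/falsified_cat.
    exact: hD' (w2 M w hM (conj h2 hG')).
- exact: in_lang2 l1 l2.
- by apply: in_lang2 (in_lang_sub m1 s1) (in_lang_sub m2 s2).
- by rewrite /=; lia.
Qed.

Lemma has_interpolant_ruleL f pG1 pD1 pG2 pD2 G D :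
  invertible [:: f] [::] pG1 pD1 pG2 pD2 ->
  sublang (pG1 ++ pD1) [:: f] -> sublang (pG2 ++ pD2) [:: f] ->
  has_interpolant (pG1 ++ G) (pD1 ++ D) -> has_interpolant (pG2 ++ G) (pD2 ++ D) ->
  has_interpolant (f :: G) D.
Proof.
move=> hinv s1 s2 IH1 IH2 G1 G2 D1 D2 hG hD.
case: (Permutation_cons_app_split hG) => [[G1' [e eG]]|[G2' [e eG]]].
- have [I1 h1] := IH1 _ _ _ _ (Permutation_app_front pG1 eG) (Permutation_app_front pD1 hD).
  have [I2 h2] := IH2 _ _ _ _ (Permutation_app_front pG2 eG) (Permutation_app_front pD2 hD).
  exists (Or I1 I2); apply: interpolant_perm (interpolant_Or hinv s1 s2 h1 h2) => //.
  exact: Permutation_sym e.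
- have [I1 h1] := IH1 _ _ _ _ (Permutation_app_inner pG1 eG) (Permutation_app_inner pD1 hD).
  have [I2 h2] := IH2 _ _ _ _ (Permutation_app_inner pG2 eG) (Permutation_app_inner pD2 hD).
  exists (And I1 I2); apply: interpolant_perm (interpolant_And hinv s1 s2 h1 h2) => //.
  exact: Permutation_sym e.
Qed.

Lemma has_interpolant_ruleR f pG1 pD1 pG2 pD2 G D :
  invertible [::] [:: f] pG1 pD1 pG2 pD2 ->
  sublang (pG1 ++ pD1) [:: f] -> sublang (pG2 ++ pD2) [:: f] ->
  has_interpolant (pG1 ++ G) (pD1 ++ D) -> has_interpolant (pG2 ++ G) (pD2 ++ D) ->
  has_interpolant G (f :: D).
Proof.
move=> hinv s1 s2 IH1 IH2 G1 G2 D1 D2 hG hD.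
case: (Permutation_cons_app_split hD) => [[D1' [e eD]]|[D2' [e eD]]].
- have [I1 h1] := IH1 _ _ _ _ (Permutation_app_front pG1 hG) (Permutation_app_front pD1 eD).
  have [I2 h2] := IH2 _ _ _ _ (Permutation_app_front pG2 hG) (Permutation_app_front pD2 eD).
  exists (Or I1 I2); apply: interpolant_perm (interpolant_Or hinv s1 s2 h1 h2) => //.
  exact: Permutation_sym e.
- have [I1 h1] := IH1 _ _ _ _ (Permutation_app_inner pG1 hG) (Permutation_app_inner pD1 eD).
  have [I2 h2] := IH2 _ _ _ _ (Permutation_app_inner pG2 hG) (Permutation_app_inner pD2 eD).
  exists (And I1 I2); apply: interpolant_perm (interpolant_And hinv s1 s2 h1 h2) => //.
  exact: Permutation_sym e.
Qed.

Lemma has_interpolant_ruleL1 f pG pD G D :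
  invertible [:: f] [::] pG pD pG pD -> sublang (pG ++ pD) [:: f] ->
  has_interpolant (pG ++ G) (pD ++ D) -> has_interpolant (f :: G) D.
Proof. by move=> hinv hs IH; exact: (has_interpolant_ruleL hinv hs hs IH IH). Qed.

Lemma has_interpolant_ruleR1 f pG pD G D :
  invertible [::] [:: f] pG pD pG pD -> sublang (pG ++ pD) [:: f] ->
  has_interpolant (pG ++ G) (pD ++ D) -> has_interpolant G (f :: D).
Proof. by move=> hinv hs IH; exact: (has_interpolant_ruleR hinv hs hs IH IH). Qed.

Lemma has_interpolant_Init p G D : has_interpolant (Var A p :: G) (Var A p :: D).
Proof.
move=> G1 G2 D1 D2 hG hD; set x := Var A p.
have [[G1' [eG _]]|[G2' [eG _]]] := Permutation_cons_app_split hG;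
  have [[D1' [eD _]]|[D2' [eD _]]] := Permutation_cons_app_split hD;
  have iG := Permutation_cons_In eG; have iD := Permutation_cons_In eD.
- by exists Bot; apply/interpolant_Bot/(valid_In iG iD).
- exists x; split=> //; first exact: valid_In iG (in_eq _ _).
  + exact: valid_In (in_eq _ _) iD.
  + by apply: in_lang_In; apply/in_app_iff; left.
  + by apply: in_lang_In; apply/in_app_iff; right.
- exists (Neg x); split=> //.
  + by apply: valid_NegR; exact: valid_In (in_eq _ _) iD.
  + by apply: valid_NegL; exact: valid_In iG (in_eq _ _).
  + by apply: (@in_lang_In _ x); apply/in_app_iff; right.
  + by apply: (@in_lang_In _ x); apply/in_app_iff; left.
- by exists (Top A); apply/interpolant_Top/(valid_In iG iD).
Qed.

Lemma has_interpolant_BotL G D : has_interpolant (Bot :: G) D.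
Proof.
move=> G1 G2 D1 D2 hG _.
have [[G1' [eG _]]|[G2' [eG _]]] := Permutation_cons_app_split hG;
  have iG := Permutation_cons_In eG.
- by exists Bot; apply/interpolant_Bot/valid_Bot.
- by exists (Top A); apply/interpolant_Top/valid_Bot.
Qed.

Lemma agts_seq_box_In (H : grp A) b l : List.In (Box H b) l -> val H \subset agts_seq l.
Proof. by case/in_lang_In => _; apply: subset_trans; exact: subsetUl. Qed.

(* The interpolant is [~ D_H ~ J] for [H] the union of the groups boxed on the
   right, and [Bot] if there are none. *)
Lemma interpolant_K_left J ps1 ps2 (G : grp A) b S1 S2 D1 D2 :
  interpolant J (bodies ps1) [:: b] (bodies ps2) [::] ->
  (forall p, List.In p ps1 -> val p.1 \subset val G) ->
  (forall p, List.In p ps2 -> val p.1 \subset val G) ->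
  exists I, interpolant I (S1 ++ boxes ps1) (Box G b :: D1) (S2 ++ boxes ps2) D2.
Proof.
case: ps2 => [|q r] [v w l m d] hps1 hps2.
  exists Bot; apply/interpolant_Bot/valid_K => //; apply: valid_cut v _.
  by apply: valid_incl w; [move=> f [<-|[]]; left | move=> f []].
pose H : grp A := exist _ (groups (q :: r)) (groups_cons_neq0 q r).
have hH : val H \subset val G := groups_sub hps2.
exists (Neg (Box H (Neg J))); split.
- apply: valid_NegR; apply: valid_perm ((Permutation_middle_front _ _ _)) (Permutation_refl _) _.
  apply: (@valid_K _ _ ((H, Neg J) :: ps1)); first exact: valid_NegL.
  by move=> p [<-|/hps1].
- apply: valid_NegL; apply: valid_K; first exact: valid_NegR.
  by move=> p /groups_In.
- change (in_lang (Box H J) ((S1 ++ boxes ps1) ++ Box G b :: D1)); apply: in_lang_Box.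
    apply: in_lang_sub l (sublang_trans (sublang_bodies ps1 [:: b]) _); solve_sublang.
  apply: subset_trans hH (agts_seq_box_In (b := b) _).
  by apply/in_app_iff; right; left.
- change (in_lang (Box H J) ((S2 ++ boxes (q :: r)) ++ D2)); apply: in_lang_Box.
    apply: in_lang_sub m (sublang_trans (sublang_bodies (q :: r) [::]) _); solve_sublang.
  apply: subset_trans (groups_sub_agts (q :: r)) _.
  by rewrite !agts_seq_cat; apply: subset_trans (subsetUr _ _) (subsetUl _ _).
- move: d; rewrite !mdepth_cat /= mdepth_boxes; case: (ps1) => [|? ?] /=; lia.
Qed.

(* The interpolant is [D_H J] for [H] the union of the groups boxed on the left,
   and [Top] if there are none. *)
Lemma interpolant_K_right J ps1 ps2 (G : grp A) b S1 S2 D1 D2 :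
  interpolant J (bodies ps1) [::] (bodies ps2) [:: b] ->
  (forall p, List.In p ps1 -> val p.1 \subset val G) ->
  (forall p, List.In p ps2 -> val p.1 \subset val G) ->
  exists I, interpolant I (S1 ++ boxes ps1) D1 (S2 ++ boxes ps2) (Box G b :: D2).
Proof.
case: ps1 => [|q r] [v w l m d] hps1 hps2.
  exists (Top A); apply/interpolant_Top/valid_K => //; apply: valid_cut _ w.
  by apply: valid_incl v; [move=> f [] | move=> f [<-|[]]; left].
pose H : grp A := exist _ (groups (q :: r)) (groups_cons_neq0 q r).
have hH : val H \subset val G := groups_sub hps1.
exists (Box H J); split.
- by apply: valid_K => // p /groups_In.
- apply: valid_perm ((Permutation_middle_front _ _ _)) (Permutation_refl _) _.
  apply: (@valid_K _ _ ((H, J) :: ps2)) => //.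
  by move=> p [<-|/hps2].
- apply: in_lang_Box.
    apply: in_lang_sub l (sublang_trans (sublang_bodies (q :: r) [::]) _); solve_sublang.
  apply: subset_trans (groups_sub_agts (q :: r)) _.
  by rewrite !agts_seq_cat; apply: subset_trans (subsetUr _ _) (subsetUl _ _).
- apply: in_lang_Box.
    apply: in_lang_sub m (sublang_trans (sublang_bodies ps2 [:: b]) _); solve_sublang.
  apply: subset_trans hH (agts_seq_box_In (b := b) _).
  by apply/in_app_iff; right; left.
- by move: d; rewrite !mdepth_cat mdepth_boxes /=; lia.
Qed.

Lemma has_interpolant_DK ps (G : grp A) b S D :
  has_interpolant (bodies ps) [:: b] -> (forall p, List.In p ps -> val p.1 \subset val G) ->
  has_interpolant (S ++ boxes ps) (Box G b :: D).
Proof.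
move=> IH hps G1 G2 D1 D2 hG hD.
have [S1 [S2 [m1 [m2 [_ em e1 e2]]]]] := Permutation_app_app_split hG.
have [ps1 [ps2 [eps E1 E2]]] := Permutation_map_app_split em; subst m1 m2.
have eb : Permutation (bodies ps) (bodies ps1 ++ bodies ps2).
  by rewrite /bodies -map_cat; exact: Permutation_map.
have hps1 p : List.In p ps1 -> val p.1 \subset val G.
  by move=> h; apply: hps; apply: Permutation_in (Permutation_sym eps) _; apply/in_app_iff; left.
have hps2 p : List.In p ps2 -> val p.1 \subset val G.
  by move=> h; apply: hps; apply: Permutation_in (Permutation_sym eps) _; apply/in_app_iff; right.
have [[D1' [e _]]|[D2' [e _]]] := Permutation_cons_app_split hD.
- have [J hJ] := IH _ _ [:: b] [::] eb (Permutation_refl _).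
  have [I hI] := interpolant_K_left S1 S2 D1' D2 hJ hps1 hps2.
  exists I; apply: interpolant_perm hI => //; exact: Permutation_sym.
- have [J hJ] := IH _ _ [::] [:: b] eb (Permutation_refl _).
  have [I hI] := interpolant_K_right S1 S2 D1 D2' hJ hps1 hps2.
  exists I; apply: interpolant_perm hI => //; exact: Permutation_sym.
Qed.

Lemma has_interpolant_DD a (H : grp A) Gm S D :
  L = LKD -> val H = [set a] -> has_interpolant Gm [::] ->
  has_interpolant (S ++ [seq Box H g | g <- Gm]) D.
Proof.
move=> hL hH IH G1 G2 D1 D2 hG _.
have [S1 [S2 [m1 [m2 [_ em e1 e2]]]]] := Permutation_app_app_split hG.
have [g1 [g2 [eg E1 E2]]] := Permutation_map_app_split em; subst m1 m2.
have [J [v w l m d]] := IH _ _ [::] [::] eg (Permutation_refl _).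
suff [I hI] : exists I, interpolant I
    (S1 ++ [seq Box H g | g <- g1]) D1 (S2 ++ [seq Box H g | g <- g2]) D2.
  by exists I; apply: interpolant_perm hI => //; exact: Permutation_sym.
clear e1 e2 eg em hG.
have sub_boxes l' S' D' : sublang l' ((S' ++ [seq Box H g | g <- l']) ++ D').
  have := sublang_bodies [seq (H, g) | g <- l'] [::].
  by rewrite bodies_pair boxes_pair cats0 => /sublang_trans; apply; solve_sublang.
case: g1 v l d => [|x1 r1] v l d.
  exists (Top A); apply/interpolant_Top/(valid_D _ hL hH); apply: valid_cut _ w.
  by apply: valid_incl v; [move=> f [] | move=> f [<-|[]]; left].
case: g2 w m => [|x2 r2] w m.
  exists Bot; apply/interpolant_Bot/(valid_D _ hL hH); apply: valid_cut v _.
  by apply: valid_incl w; [move=> f [<-|[]]; left | move=> f []].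
exists (Box H J); split.
- rewrite -boxes_pair; apply: valid_K; first by rewrite bodies_pair.
  by move=> p /(in_map_iff (fun g => (H, g)) (x1 :: r1)) [g [<- _]].
- apply: valid_perm ((Permutation_middle_front _ _ _)) (Permutation_refl _) _.
  exact: (valid_D (Gm := J :: x2 :: r2) _ hL hH w).
- apply: in_lang_Box; first by apply: in_lang_sub l _; rewrite cats0.
  by apply: (agts_seq_box_In (b := x1)); apply/in_app_iff; left; apply/in_app_iff; right; left.
- apply: in_lang_Box; first by apply: in_lang_sub m _; rewrite cats0.
  by apply: (agts_seq_box_In (b := x2)); apply/in_app_iff; left; apply/in_app_iff; right; left.
- by move: d; rewrite -boxes_pair !mdepth_cat mdepth_boxes bodies_pair /=; lia.
Qed.

Ltac solve_invertible :=
  let M := fresh "M" in let w := fresh "w" in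
  move=> M w _; rewrite /falsified /=; apply: NNPP; tauto.

Theorem derivable_has_interpolant G D : derivable L G D -> has_interpolant G D.
Proof.
elim=> {G D}.
- move=> G D G' D' _ IH pG pD G1 G2 D1 D2 h1 h2.
  exact: IH (Permutation_trans pG h1) (Permutation_trans pD h2).
- exact: has_interpolant_Init.
- exact: has_interpolant_BotL.
- move=> G D a1 a2 _ IH1 _ IH2.
  apply: (has_interpolant_ruleR (pG1 := [::]) (pD1 := [:: a1]) (pG2 := [::]) (pD2 := [:: a2]))
    => //;
    [solve_invertible | solve_sublang | solve_sublang].
- move=> G D a1 a2 _ IH.
  apply: (has_interpolant_ruleL1 (pG := [:: a1; a2]) (pD := [::])) => //;
    [solve_invertible | solve_sublang].
- move=> G D a1 a2 _ IH.
  apply: (has_interpolant_ruleR1 (pG := [::]) (pD := [:: a1; a2])) => //;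
    [solve_invertible | solve_sublang].
- move=> G D a1 a2 _ IH1 _ IH2.
  apply: (has_interpolant_ruleL (pG1 := [:: a1]) (pD1 := [::]) (pG2 := [:: a2]) (pD2 := [::]))
    => //;
    [solve_invertible | solve_sublang | solve_sublang].
- move=> G D a1 a2 _ IH.
  apply: (has_interpolant_ruleR1 (pG := [:: a1]) (pD := [:: a2])) => //;
    [solve_invertible | solve_sublang].
- move=> G D a1 a2 _ IH1 _ IH2.
  apply: (has_interpolant_ruleL (pG1 := [::]) (pD1 := [:: a1]) (pG2 := [:: a2]) (pD2 := [::]))
    => //;
    [solve_invertible | solve_sublang | solve_sublang].
- move=> G D a _ IH.
  apply: (has_interpolant_ruleR1 (pG := [:: a]) (pD := [::])) => //;
    [solve_invertible | solve_sublang].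
- move=> G D a _ IH.
  apply: (has_interpolant_ruleL1 (pG := [::]) (pD := [:: a])) => //;
    [solve_invertible | solve_sublang].
- move=> ps G b Sig Om _ IH hps _ _; exact: has_interpolant_DK IH hps.
- move=> a Ga Gm Sig Om hL hGa _ _ IH _ _; exact: has_interpolant_DD hL hGa IH.
- move=> G D H a hL _ IH.
  apply: (has_interpolant_ruleL1 (pG := [:: Box H a; a]) (pD := [::])) => //; last solve_sublang.
  move=> M w hM [[hb _] _]; left; split=> //; split=> //; split=> //.
  by apply: hb => y _; move: hM; rewrite hL; apply.
Qed.

Corollary derivable_valid G D : derivable L G D -> valid L G D.
Proof.
move=> /derivable_has_interpolant /(_ G [::] D [::]); rewrite !cats0.
case=> // I [v1 v2 _ _ _] M w hM hG.
by case: (v1 M w hM hG) => // hI; case: (v2 M w hM (conj hI Logic.I)).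
Qed.
End Interpolation.

(** * Completeness *)

Section Glue.
Variables (A : finType) (L : logic).
Implicit Types (f : form A) (G D At Dt : seq (form A)) (P : seq (grp A * form A)).

Definition is_var f := exists x, f = Var A x.

(* The boxes [P] of the antecedent need only hold at proper successors of the
   root: the root is irreflexive except in [KT_D], where rule (D_T) has already
   put their bodies into the antecedent. *)
Definition countermodel G P D := exists (M : model A) w,
  [/\ frame L M, L <> LKT -> forall a, ~ Rel M a w w, falsified M w G D &
      forall p, List.In p P -> forall v, v <> w -> drel M (val p.1) w v -> sat M v p.2].

Definition trivial_model : model A := Model (fun _ _ _ => True) (fun _ _ => False).

Lemma frame_trivial_model : frame L trivial_model.
Proof. by case: L => //= a w; exists w. Qed.

Record child := Child { cmodel : model A; cworld : seq nat; cgroup : {set A} }.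

Definition trivial_child S := Child trivial_model [::] S.

Definition good_child P (c : child) := frame L (cmodel c) /\
  forall p, List.In p P -> val p.1 \subset cgroup c -> sat (cmodel c) (cworld c) p.2.

Lemma good_trivial_child P : good_child P (trivial_child set0).
Proof.
split; first exact: frame_trivial_model.
by move=> p _; rewrite subset0 (negbTE (valP p.1)).
Qed.

Definition nth_child (ch : seq child) k := List.nth k ch (trivial_child set0).

Definition glue At (ch : seq child) : model A :=
  Model (fun a u v => match u, v with
    | [::], [::] => L = LKT
    | [::], k :: p => a \in cgroup (nth_child ch k) /\ p = cworld (nth_child ch k)
    | k :: p, k' :: q => k = k' /\ Rel (cmodel (nth_child ch k)) a p q
    | _ :: _, [::] => False end)
  (fun x u => if u is k :: p then Val (cmodel (nth_child ch k)) x p else List.In (Var A x) At).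

Lemma sat_glue At ch f k p : sat (glue At ch) (k :: p) f <-> sat (cmodel (nth_child ch k)) p f.
Proof.
elim: f k p => [x||a IHa b IHb|a IHa b IHb|a IHa b IHb|a IHa|H a IHa] k p //=;
  rewrite ?IHa ?IHb //.
split=> h q hq.
- by apply/IHa; apply: h => y /hq.
- have [a0 ha0] := grp_neq0 H; case: q hq => [|k' q] hq; first by case: (hq a0 ha0).
  have [ek _] := hq a0 ha0; subst k'.
  by apply/IHa; apply: h => y /hq [].
Qed.

Lemma nth_child_In ch k : nth_child ch k = trivial_child set0 \/ List.In (nth_child ch k) ch.
Proof.
by rewrite /nth_child; case: (nth_in_or_default k ch (trivial_child set0)) => [|->]; auto.
Qed.

Lemma frame_glue At ch P :
  (forall c, List.In c ch -> good_child P c) ->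
  (L = LKD -> forall a, exists2 c, List.In c ch & a \in cgroup c) ->
  frame L (glue At ch).
Proof.
move=> hch hD.
have frame_nth k : frame L (cmodel (nth_child ch k)).
  by case: (nth_child_In ch k) => [->|/hch []//]; exact: frame_trivial_model.
case hL: L frame_nth hD => //= frame_nth hD.
- move=> a [|k p].
    have [c hc ha] := hD erefl a; have [k [_ ek]] := In_nth ch c (trivial_child set0) hc.
    by exists (k :: cworld c); rewrite /nth_child ek.
  by have [q hq] := frame_nth k a p; exists (k :: q).
- by move=> a [|k p] //=; split=> //; exact: frame_nth.
Qed.

Lemma glue_countermodel At P Dt ch :
  (forall f, List.In f At -> is_var f) -> (forall f, List.In f Dt -> omegaOK f) ->
  (forall x, List.In (Var A x) At -> ~ List.In (Var A x) Dt) ->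
  (forall c, List.In c ch -> good_child P c) ->
  (forall (G : grp A) b, List.In (Box G b) Dt ->
     exists2 c, List.In c ch & cgroup c = val G /\ ~ sat (cmodel c) (cworld c) b) ->
  (L = LKD -> forall a, exists2 c, List.In c ch & a \in cgroup c) ->
  countermodel At P Dt.
Proof.
move=> hAt hDt hclash hgood hbox hser.
exists (glue At ch), [::]; split.
- exact: frame_glue hgood hser.
- by move=> hL a /=.
- split; first by apply/sat_allP => f hf; have [x ex] := hAt f hf; subst f.
  move/sat_someP => [[x||a b|a b|a b|a|G b] hf] //=; try by have := hDt _ hf.
    by move=> hx; exact: hclash hx hf.
  have [c hc [eG hb]] := hbox G b hf; have [k [_ ek]] := In_nth ch c (trivial_child set0) hc.
  move=> h; apply: hb; rewrite -ek -sat_glue; apply: h => y hy /=.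
  by rewrite /nth_child ek eG.
- move=> p hp [//|k q] _ hv; have [a0 ha0] := grp_neq0 p.1.
  have [ha0' ->] := hv a0 ha0; apply/sat_glue.
  case: (nth_child_In ch k) ha0' => [->|hc] ha0'; first by rewrite inE in ha0'.
  by apply: (proj2 (hgood _ hc)) => //; apply/subsetP => y /hv [].
Qed.

End Glue.

Section Saturated.
Variables (A : finType) (L : logic).
Implicit Types (f : form A) (G D At Dt : seq (form A)) (P : seq (grp A * form A)).

Definition refutable G D := exists (M : model A) w, frame L M /\ falsified M w G D.

Definition grp_sub (S : {set A}) (p : grp A * form A) := val p.1 \subset S.

Lemma set1_neq0 (a : A) : [set a] != set0.
Proof. by apply/set0Pn; exists a; rewrite inE. Qed.

Definition agent_grp (a : A) : grp A := exist _ [set a] (set1_neq0 a).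

Lemma boxes_sees_agent a P :
  boxes [seq p <- P | grp_sub [set a] p] =
  [seq Box (agent_grp a) g | g <- bodies [seq p <- P | grp_sub [set a] p]].
Proof.
elim: P => //= p P IH; rewrite {1}/grp_sub; case: ifP => //= hp; rewrite IH.
congr (Box _ _ :: _); apply: val_inj => /=; apply/eqP; rewrite eqEsubset hp /=.
by have [b hb] := grp_neq0 p.1; move/subsetP/(_ b hb): hp; rewrite inE => /eqP <-; rewrite sub1set.
Qed.

Lemma boxes_filter_perm At P (q : pred (grp A * form A)) :
  Permutation ((At ++ boxes [seq p <- P | predC q p]) ++ boxes [seq p <- P | q p]) (At ++ boxes P).
Proof.
rewrite -catA; apply: Permutation_app_head; rewrite /boxes -map_cat.
apply: Permutation_map; apply: Permutation_trans (Permutation_app_comm _ _) _.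
exact: Permutation_sym (Permutation_filterC _ _).
Qed.

Lemma derivable_Init_In G D x : List.In (Var A x) G -> List.In (Var A x) D -> derivable L G D.
Proof.
move=> iG iD; have [G' hG] := In_Permutation iG; have [D' hD] := In_Permutation iD.
exact: Exch (Init _ _ _ _) (Permutation_sym hG) (Permutation_sym hD).
Qed.

Lemma derivable_K_saturated At P Dt (G : grp A) b :
  (forall f, List.In f At -> is_var f) -> (forall f, List.In f Dt -> omegaOK f) ->
  List.In (Box G b) Dt -> derivable L (bodies [seq p <- P | grp_sub (val G) p]) [:: b] ->
  derivable L (At ++ boxes P) Dt.
Proof.
move=> hAt hDt iG hder; have [Om hO] := In_Permutation iG.
apply: Exch (boxes_filter_perm At P _) (Permutation_sym hO); apply: DK hder _ _ _.
- by move=> p /In_filter [].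
- move=> f /in_app_iff [/hAt [y ->] //|/in_map_iff [p [<- /In_filter [_ hp]]]].
  exact: hp.
- by move=> f hf; apply: hDt; apply: Permutation_in (Permutation_sym hO) _; right.
Qed.

Lemma derivable_D_saturated a At P Dt :
  L = LKD -> (forall f, List.In f At -> is_var f) -> (forall f, List.In f Dt -> omegaOK f) ->
  bodies [seq p <- P | grp_sub [set a] p] <> [::] ->
  derivable L (bodies [seq p <- P | grp_sub [set a] p]) [::] ->
  derivable L (At ++ boxes P) Dt.
Proof.
move=> hL hAt hDt hne hder.
apply: Exch (boxes_filter_perm At P (grp_sub [set a])) (Permutation_refl _).
rewrite boxes_sees_agent; apply: DD hL _ hne hder _ hDt => //.
move=> f /in_app_iff [/hAt [y ->] //|/in_map_iff [p [<- /In_filter [_ hp]]]].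
by apply: contraNneq hp => e; rewrite /grp_sub e subxx.
Qed.

Section Children.
Variables (d : nat) (P : seq (grp A * form A)).
Hypothesis IH : forall G D, mdepth (G ++ D) < d -> derivable L G D \/ refutable G D.
Hypothesis depth_P : forall p, List.In p P -> depth p.2 < d.

Lemma premise_child (S : {set A}) D : (forall f, List.In f D -> depth f < d) ->
  ~ (bodies [seq p <- P | grp_sub S p] ++ D <> [::] /\
     derivable L (bodies [seq p <- P | grp_sub S p]) D) ->
  exists c, [/\ good_child L P c, cgroup c = S & ~ sat_some (cmodel c) (cworld c) D].
Proof.
set B := bodies _ => hD hnot.
case E: (B ++ D) => [|f l].
  have := congr1 size E; rewrite size_cat => /eqP; rewrite addn_eq0 => /andP [/nilP EB /nilP ED].
  exists (trivial_child S); split=> //; last by rewrite ED.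
  split; first exact: frame_trivial_model.
  move=> p hp hS; have: List.In p.2 B by apply/in_map_iff; exists p; split=> //; exact/In_filter.
  by rewrite EB.
have : mdepth (B ++ D) < d.
  apply: mdepth_lt; last by rewrite E.
  by move=> g /in_app_iff [/in_map_iff [p [<- /In_filter [/depth_P]]]|/hD].
case/IH => [hder|[M [w [hM [hB hDs]]]]]; first by case: hnot; rewrite E.
exists (Child M w S); split=> //; split=> // p hp hS.
by move/sat_allP: hB; apply; apply/in_map_iff; exists p; split=> //; exact/In_filter.
Qed.

Lemma box_children Dt :
  (forall (G : grp A) b, List.In (Box G b) Dt -> depth b < d) ->
  ~ (exists (G : grp A) b, List.In (Box G b) Dt /\
       derivable L (bodies [seq p <- P | grp_sub (val G) p]) [:: b]) ->
  exists ch, (forall c, List.In c ch -> good_child L P c) /\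
    forall (G : grp A) b, List.In (Box G b) Dt ->
      exists2 c, List.In c ch & cgroup c = val G /\ ~ sat (cmodel c) (cworld c) b.
Proof.
move=> depth_Dt hK.
pose R f c := good_child L P c /\
  if f is Box G b then cgroup c = val G /\ ~ sat (cmodel c) (cworld c) b else True.
have [|ch [h1 h2]] := @list_choice _ _ R Dt.
  move=> [x||a b|a b|a b|a|G b] hf;
    try by exists (trivial_child set0); split=> //; exact: good_trivial_child.
  have hb : forall f, List.In f [:: b] -> depth f < d by move=> f [<-|[]]; exact: depth_Dt hf.
  have [c [hc eS hnb]] : exists c,
      [/\ good_child L P c, cgroup c = val G & ~ sat_some (cmodel c) (cworld c) [:: b]].
    by apply: premise_child hb _ => -[_ hder]; apply: hK; exists G, b.
  by exists c; split=> //; split=> // h; apply: hnb; left.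
exists ch; split; first by move=> c /h2 [f _ []].
by move=> G b /h1 [c hc [_ h]]; exists c.
Qed.

Lemma agent_children :
  ~ (exists a, bodies [seq p <- P | grp_sub [set a] p] <> [::] /\
       derivable L (bodies [seq p <- P | grp_sub [set a] p]) [::]) ->
  exists ch, (forall c, List.In c ch -> good_child L P c) /\
    forall a, exists2 c, List.In c ch & a \in cgroup c.
Proof.
move=> hD.
pose R a c := good_child L P c /\ cgroup c = [set a].
have [|ch [h1 h2]] := @list_choice _ _ R (enum A).
  move=> a _; have [c [hc eS _]] : exists c,
      [/\ good_child L P c, cgroup c = [set a] & ~ sat_some (cmodel c) (cworld c) [::]].
    by apply: premise_child => // -[hne hder]; apply: hD; exists a; rewrite cats0 in hne.
  by exists c.
exists ch; split; first by move=> c /h2 [a _ []].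
move=> a; have /InP /h1 [c hc [_ eS]] : a \in enum A by rewrite mem_enum.
by exists c; rewrite // eS set11.
Qed.
End Children.

Lemma saturated_decided d At P Dt :
  (forall G D, mdepth (G ++ D) < d -> derivable L G D \/ refutable G D) ->
  (forall f, List.In f At -> is_var f) -> (forall f, List.In f Dt -> omegaOK f) ->
  mdepth (At ++ boxes P ++ Dt) <= d ->
  derivable L (At ++ boxes P) Dt \/ countermodel L At P Dt.
Proof.
move=> IH hAt hDt hd.
have depth_P p : List.In p P -> depth p.2 < d.
  move=> hp; have /mdepth_In /= : List.In (Box p.1 p.2) (At ++ boxes P ++ Dt).
    by apply/in_app_iff; right; apply/in_app_iff; left; apply/in_map_iff; exists p.
  by lia.
have depth_Dt (G : grp A) b : List.In (Box G b) Dt -> depth b < d.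
  move=> hb; have /mdepth_In /= : List.In (Box G b) (At ++ boxes P ++ Dt).
    by apply/in_app_iff; right; apply/in_app_iff; right.
  by lia.
case: (classic (exists x, List.In (Var A x) At /\ List.In (Var A x) Dt)) => [[x [h1 h2]]|hclash].
  by left; apply: derivable_Init_In h2; apply/in_app_iff; left; exact: h1.
case: (classic (exists (G : grp A) b, List.In (Box G b) Dt /\
    derivable L (bodies [seq p <- P | grp_sub (val G) p]) [:: b])) => [[G [b [hb hder]]]|hK].
  by left; exact: derivable_K_saturated hAt hDt hb hder.
case: (classic (L = LKD /\ exists a, bodies [seq p <- P | grp_sub [set a] p] <> [::] /\
    derivable L (bodies [seq p <- P | grp_sub [set a] p]) [::])) => [[hL [a [hne hder]]]|hD].
  by left; exact: derivable_D_saturated hL hAt hDt hne hder.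
right.
have [chB [goodB hB]] := box_children IH depth_P depth_Dt hK.
have [chA [goodA hA]] : exists ch, (forall c, List.In c ch -> good_child L P c) /\
    (L = LKD -> forall a, exists2 c, List.In c ch & a \in cgroup c).
  case: (classic (L = LKD)) => hL; last by exists [::].
  have [ch [h1 h2]] := agent_children IH depth_P (fun h => hD (conj hL h)).
  by exists ch.
apply: (glue_countermodel (ch := chB ++ chA)) => //.
- by move=> x h1 h2; apply: hclash; exists x.
- by move=> c /in_app_iff [/goodB|/goodA].
- by move=> G b /hB [c hc h]; exists c => //; apply/in_app_iff; left.
- by move=> hL a; have [c hc h] := hA hL a; exists c => //; apply/in_app_iff; right.
Qed.
End Saturated.

Section Completeness.
Variables (A : finType) (L : logic).
Implicit Types (f : form A) (G D At Dt : seq (form A)) (P : seq (grp A * form A)).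

Fixpoint weight f : nat :=
  match f with
  | Var _ | Bot => 1
  | And a b | Or a b | Imp a b => weight a + weight b + 1
  | Neg a | Box _ a => weight a + 1
  end.

Definition mweight l := foldr (fun f n => weight f + n) 0 l.

(* [G] and [D] are still to be decomposed; [At] are atoms, [P] boxes of the
   antecedent and [Dt] atoms and boxes of the succedent. *)
Definition decided G At P D Dt :=
  derivable L (G ++ At ++ boxes P) (D ++ Dt) \/ countermodel L (G ++ At) P (D ++ Dt).

Lemma countermodel_perm G G' P D D' :
  Permutation G G' -> Permutation D D' -> countermodel L G P D -> countermodel L G' P D'.
Proof.
move=> hG hD [M [w [hM hirr [hall hex] hP]]]; exists M, w; split=> //; split.
- exact: sat_all_perm hG hall.
- by move/(sat_some_perm (Permutation_sym hD)).
Qed.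

Lemma countermodel_step cG cD pG pD G P D :
  (forall M w, falsified M w pG pD -> falsified M w cG cD) ->
  countermodel L (pG ++ G) P (pD ++ D) -> countermodel L (cG ++ G) P (cD ++ D).
Proof.
move=> h [M [w [hM hirr /falsified_cat [/h hc hf] hP]]]; exists M, w; split=> //.
exact/falsified_cat.
Qed.

Lemma decided_rule cG cD pG1 pD1 pG2 pD2 G At P D Dt :
  (forall M w, falsified M w pG1 pD1 -> falsified M w cG cD) ->
  (forall M w, falsified M w pG2 pD2 -> falsified M w cG cD) ->
  (forall X Y, derivable L (pG1 ++ X) (pD1 ++ Y) -> derivable L (pG2 ++ X) (pD2 ++ Y) ->
     derivable L (cG ++ X) (cD ++ Y)) ->
  decided (pG1 ++ G) At P (pD1 ++ D) Dt -> decided (pG2 ++ G) At P (pD2 ++ D) Dt ->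
  decided (cG ++ G) At P (cD ++ D) Dt.
Proof.
rewrite /decided -!catA => h1 h2 hrule [d1|c1]; last by right; exact: countermodel_step h1 c1.
by case=> [d2|c2]; [left; exact: hrule | right; exact: countermodel_step h2 c2].
Qed.

Lemma decided_rule1 cG cD pG pD G At P D Dt :
  (forall M w, falsified M w pG pD -> falsified M w cG cD) ->
  (forall X Y, derivable L (pG ++ X) (pD ++ Y) -> derivable L (cG ++ X) (cD ++ Y)) ->
  decided (pG ++ G) At P (pD ++ D) Dt -> decided (cG ++ G) At P (cD ++ D) Dt.
Proof. by move=> h hrule hd; exact: (decided_rule h h (fun X Y d _ => hrule X Y d) hd hd). Qed.

Lemma decided_deferL x G At P D Dt :
  decided G (Var A x :: At) P D Dt -> decided (Var A x :: G) At P D Dt.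
Proof.
have hp : Permutation (G ++ Var A x :: At) ((Var A x :: G) ++ At).
  exact: Permutation_middle_front.
case=> [h|h]; [left | right; exact: countermodel_perm hp (Permutation_refl _) h].
by apply: Exch h _ (Permutation_refl _); rewrite !catA; exact: Permutation_app_tail _ hp.
Qed.

Lemma decided_deferR f G At P D Dt :
  decided G At P D (f :: Dt) -> decided G At P (f :: D) Dt.
Proof.
have hp : Permutation (D ++ f :: Dt) ((f :: D) ++ Dt) by exact: Permutation_middle_front.
case=> [h|h]; first by left; exact: Exch h (Permutation_refl _) hp.
by right; exact: countermodel_perm (Permutation_refl _) hp h.
Qed.

Lemma decided_boxL (H : grp A) b G At P D Dt :
  (L = LKT -> decided (b :: G) At ((H, b) :: P) D Dt) ->
  (L <> LKT -> decided G At ((H, b) :: P) D Dt) ->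
  decided (Box H b :: G) At P D Dt.
Proof.
have hp : Permutation (G ++ At ++ Box H b :: boxes P) (Box H b :: G ++ At ++ boxes P).
  by rewrite !catA; exact: Permutation_middle_front.
have [a0 ha0] := grp_neq0 H.
case: (classic (L = LKT)) => [hT /(_ hT) + _|hT _ /(_ hT)];
  case=> [h|[M [w [hM hirr [hall hex] hP]]]].
- left; apply: DT hT _.
  exact: Exch h (Permutation_trans (perm_skip b hp) (perm_swap _ _ _)) (Permutation_refl _).
- right; exists M, w; split=> //; last by move=> p hp'; apply: hP; right.
  case: hall => hb hall; split=> //; split=> // v hv.
  case: (classic (v = w)) => [->|hvw] //.
  exact: hP (H, b) (in_eq _ _) v hvw hv.
- by left; exact: Exch h hp (Permutation_refl _).
- right; exists M, w; split=> //; last by move=> p hp'; apply: hP; right.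
  split=> //; split=> // v hv.
  case: (classic (v = w)) => [evw|hvw]; first by subst v; case: (hirr hT a0); exact: hv.
  exact: hP (H, b) (in_eq _ _) v hvw hv.
Qed.

Ltac solve_falsified :=
  let M := fresh "M" in let w := fresh "w" in move=> M w; rewrite /falsified /=; tauto.

Ltac solve_measure hd hn := move: hd hn; rewrite ?mdepth_cat /= ?mdepth_cat !geq_max; lia.

Definition decides_below d n := forall G At P D Dt,
  (forall f, List.In f At -> is_var f) -> (forall f, List.In f Dt -> omegaOK f) ->
  mdepth (G ++ At ++ boxes P ++ D ++ Dt) <= d -> mweight G + mweight D < n ->
  decided G At P D Dt.

Lemma decided_succ d n f At P D Dt : decides_below d n ->
  (forall f, List.In f At -> is_var f) -> (forall f, List.In f Dt -> omegaOK f) ->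
  mdepth ([::] ++ At ++ boxes P ++ (f :: D) ++ Dt) <= d -> mweight (f :: D) < n.+1 ->
  decided [::] At P (f :: D) Dt.
Proof.
move=> IHn hAt hDt hd hn.
case: f hd hn => [x||a b|a b|a b|a|H b] hd hn;
  try by apply: decided_deferR; apply: IHn; [| move=> g [<-|/hDt] | solve_measure hd hn ..].
- apply: (decided_rule (cG := [::]) (cD := [:: And a b]) (pG1 := [::]) (pD1 := [:: a])
    (pG2 := [::]) (pD2 := [:: b])); try solve_falsified; first by move=> X Y; exact: RAnd.
  + by apply: IHn => //; solve_measure hd hn.
  + by apply: IHn => //; solve_measure hd hn.
- apply: (decided_rule1 (cG := [::]) (cD := [:: Or a b]) (pG := [::]) (pD := [:: a; b]));
    first solve_falsified; first by move=> X Y; exact: ROr.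
  by apply: IHn => //; solve_measure hd hn.
- apply: (decided_rule1 (cG := [::]) (cD := [:: Imp a b]) (pG := [:: a]) (pD := [:: b]));
    first solve_falsified; first by move=> X Y; exact: RImp.
  by apply: IHn => //; solve_measure hd hn.
- apply: (decided_rule1 (cG := [::]) (cD := [:: Neg a]) (pG := [:: a]) (pD := [::]));
    first solve_falsified; first by move=> X Y; exact: RNeg.
  by apply: IHn => //; solve_measure hd hn.
Qed.

Lemma decided_ante d n f G At P D Dt : decides_below d n ->
  (forall f, List.In f At -> is_var f) -> (forall f, List.In f Dt -> omegaOK f) ->
  mdepth ((f :: G) ++ At ++ boxes P ++ D ++ Dt) <= d -> mweight (f :: G) + mweight D < n.+1 ->
  decided (f :: G) At P D Dt.
Proof.
move=> IHn hAt hDt hd hn.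
case: f hd hn => [x||a b|a b|a b|a|H b] hd hn.
- apply: decided_deferL; apply: IHn => //; last by solve_measure hd hn.
  by move=> g [<-|/hAt]; first by exists x.
- by left; exact: BotL.
- apply: (decided_rule1 (cG := [:: And a b]) (cD := [::]) (pG := [:: a; b]) (pD := [::]));
    first solve_falsified; first by move=> X Y; exact: LAnd.
  by apply: IHn => //; solve_measure hd hn.
- apply: (decided_rule (cG := [:: Or a b]) (cD := [::]) (pG1 := [:: a]) (pD1 := [::])
    (pG2 := [:: b]) (pD2 := [::])); try solve_falsified; first by move=> X Y; exact: LOr.
  + by apply: IHn => //; solve_measure hd hn.
  + by apply: IHn => //; solve_measure hd hn.
- apply: (decided_rule (cG := [:: Imp a b]) (cD := [::]) (pG1 := [::]) (pD1 := [:: a])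
    (pG2 := [:: b]) (pD2 := [::])); try solve_falsified; first by move=> X Y; exact: LImp.
  + by apply: IHn => //; solve_measure hd hn.
  + by apply: IHn => //; solve_measure hd hn.
- apply: (decided_rule1 (cG := [:: Neg a]) (cD := [::]) (pG := [::]) (pD := [:: a]));
    first solve_falsified; first by move=> X Y; exact: LNeg.
  by apply: IHn => //; solve_measure hd hn.
- by apply: decided_boxL => _; apply: IHn => //; solve_measure hd hn.
Qed.

Lemma decides_below_all d n : decides_below d n.
Proof.
elim/ltn_ind: d n => d IHd.
have IH G D : mdepth (G ++ D) < d -> derivable L G D \/ refutable L G D.
  move=> hGD; have [h|[M [w [hM _ hf _]]]] : decided G [::] [::] D [::].
    by apply: (IHd _ hGD (mweight G + mweight D).+1) => //; rewrite cats0.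
  - by left; rewrite /= !cats0 in h.
  - by right; exists M, w; rewrite !cats0 in hf.
elim=> [|n IHn] G At P D Dt hAt hDt hd hn; first by rewrite ltn0 in hn.
case: G hd hn => [|f G] hd hn; first case: D hd hn => [|f D] hd hn.
- exact: saturated_decided IH hAt hDt hd.
- exact: decided_succ IHn hAt hDt hd hn.
- exact: decided_ante IHn hAt hDt hd hn.
Qed.

Theorem completeness G D : valid L G D -> derivable L G D.
Proof.
move=> hv; have : decided G [::] [::] D [::].
  by apply: (@decides_below_all (mdepth (G ++ D)) (mweight G + mweight D).+1) => //; rewrite cats0.
rewrite /decided /= !cats0 => -[//|[M [w [hM _ [hG hD] _]]]].
by case: hD; exact: hv.
Qed.

End Completeness.

(** * Uniform interpolants *)

Section BooleanCombinations.
Variable A : finType.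
Implicit Types (f g : form A) (gs : seq (form A)) (s : seq bool) (M : model A).

Fixpoint bool_seqs n : seq (seq bool) :=
  if n is n.+1 then map (cons true) (bool_seqs n) ++ map (cons false) (bool_seqs n) else [:: [::]].

Lemma bool_seqs_In s : List.In s (bool_seqs (size s)).
Proof.
elim: s => [|b s IH] /=; first by left.
by apply/in_app_iff; case: b; [left|right]; apply/in_map_iff; exists s.
Qed.

Lemma bool_seqs_size n s : List.In s (bool_seqs n) -> size s = n.
Proof.
elim: n s => [|n IH] s /=; first by case=> [<-|[]].
by case/in_app_iff => /in_map_iff [t [<- /IH ht]] /=; rewrite ht.
Qed.

Fixpoint literals gs s : form A :=
  match gs, s with
  | g :: gs', b :: s' => And (if b then g else Neg g) (literals gs' s')
  | _, _ => Top A
  end.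

Definition dnf gs (S : seq (seq bool)) : form A :=
  foldr (fun s acc => Or (literals gs s) acc) Bot S.

Fixpoint truth_vector M w gs s : Prop :=
  match gs, s with
  | g :: gs', b :: s' => (sat M w g <-> b) /\ truth_vector M w gs' s'
  | [::], [::] => True
  | _, _ => False
  end.

Lemma truth_vector_size M w gs s : truth_vector M w gs s -> size s = size gs.
Proof. by elim: gs s => [|g gs IH] [|b s] //= [_ /IH ->]. Qed.

Lemma truth_vector_exists M w gs : exists s, truth_vector M w gs s.
Proof.
elim: gs => [|g gs [s h]]; first by exists [::].
by case: (classic (sat M w g)) => hg; [exists (true :: s) | exists (false :: s)]; split.
Qed.

Lemma truth_vector_uniq M w gs s s' : truth_vector M w gs s -> truth_vector M w gs s' -> s = s'.
Proof.
elim: gs s s' => [|g gs IH] [|b s] [|b' s'] //= [h1 h2] [h1' h2'].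
by rewrite (IH _ _ h2 h2'); congr (_ :: _); apply/idP/idP => [/h1/h1'|/h1'/h1].
Qed.

Lemma sat_literals M w gs s :
  size s = size gs -> (sat M w (literals gs s) <-> truth_vector M w gs s).
Proof.
elim: gs s => [|g gs IH] [|b s] //= e; first by split=> // _ [].
rewrite IH; last by case: e.
case: b; split=> -[h1 h2]; split=> //.
- exact/h1.
- by move/h1.
Qed.

Lemma sat_dnf M w gs S : sat M w (dnf gs S) <-> exists2 s, List.In s S & sat M w (literals gs s).
Proof.
elim: S => [|s S IH] /=; first by split=> // [[]].
rewrite IH; split.
- by case=> [h|[t h1 h2]]; [exists s|exists t]; auto.
- by case=> t [<-|h1] h2; [left|right; exists t].
Qed.

Definition bool_combination gs f :=
  exists p : pred (seq bool), forall M w s, truth_vector M w gs s -> (sat M w f <-> p s).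

(* One disjunctive normal form for each set of truth vectors. *)
Definition normal_forms gs : seq (form A) :=
  [seq dnf gs (mask m (bool_seqs (size gs))) | m <- bool_seqs (size (bool_seqs (size gs)))].

Lemma bool_combination_normal_form gs f : bool_combination gs f ->
  exists2 g, List.In g (normal_forms gs) & forall M w, sat M w f <-> sat M w g.
Proof.
move=> [p hp]; exists (dnf gs (filter p (bool_seqs (size gs)))).
  apply/in_map_iff; exists (map p (bool_seqs (size gs))); rewrite -filter_mask; split=> //.
  by have := bool_seqs_In (map p (bool_seqs (size gs))); rewrite size_map.
move=> M w; have [s hs] := truth_vector_exists M w gs; rewrite (hp M w s hs) sat_dnf; split.
- move=> ps; exists s.
    by apply/In_filter; rewrite -(truth_vector_size hs); split=> //; exact: bool_seqs_In.
  by apply/sat_literals => //; exact: truth_vector_size hs.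
- move=> [t /In_filter [/bool_seqs_size ht pt]] /(sat_literals _ _ ht) h.
  by rewrite (truth_vector_uniq hs h).
Qed.

Lemma bool_combination_In gs g : List.In g gs -> bool_combination gs g.
Proof.
move=> hg; have [i [/ltP hi ei]] := In_nth gs g g hg.
exists (fun s => nth false s i); move=> M w s; rewrite -ei.
elim: gs s i {hg ei} hi => [|g' gs IH] [|b s] [|i] //= hi [h1 h2] //.
exact: IH.
Qed.

Lemma bool_combination_Bot gs : bool_combination gs Bot.
Proof. by exists (fun _ => false). Qed.

Lemma bool_combination_And gs f g :
  bool_combination gs f -> bool_combination gs g -> bool_combination gs (And f g).
Proof.
move=> [p hp] [q hq]; exists (fun s => p s && q s); move=> M w s hs /=.
by rewrite (hp _ _ _ hs) (hq _ _ _ hs); split; [case=> -> -> | move/andP].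
Qed.

Lemma bool_combination_Or gs f g :
  bool_combination gs f -> bool_combination gs g -> bool_combination gs (Or f g).
Proof.
move=> [p hp] [q hq]; exists (fun s => p s || q s); move=> M w s hs /=.
by rewrite (hp _ _ _ hs) (hq _ _ _ hs); split; [case=> ->; rewrite ?orbT | move/orP].
Qed.

Lemma bool_combination_Imp gs f g :
  bool_combination gs f -> bool_combination gs g -> bool_combination gs (Imp f g).
Proof.
move=> [p hp] [q hq]; exists (fun s => ~~ p s || q s); move=> M w s hs /=.
by rewrite (hp _ _ _ hs) (hq _ _ _ hs); case: (p s) => //=; split=> // h; apply: h.
Qed.

Lemma bool_combination_Neg gs f : bool_combination gs f -> bool_combination gs (Neg f).
Proof.
move=> [p hp]; exists (fun s => ~~ p s); move=> M w s hs /=.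
by rewrite (hp _ _ _ hs); case: (p s); split=> // h; case: h.
Qed.

Lemma bool_combination_equiv gs f g :
  (forall M w, sat M w f <-> sat M w g) -> bool_combination gs g -> bool_combination gs f.
Proof. by move=> e [p hp]; exists p => M w s hs; rewrite e; exact: hp. Qed.

End BooleanCombinations.

Section Vocabulary.
Variables (A : finType) (Vs : seq nat) (Ag : {set A}).
Implicit Types (f g : form A) (l gs R : seq (form A)).

Definition in_voc f := {subset vars f <= Vs} /\ agts f \subset Ag.

Definition all_grps : seq (grp A) := pmap insub (enum {set A}).

Lemma all_grps_In (H : grp A) : List.In H all_grps.
Proof. by apply/InP; rewrite mem_pmap; apply/mapP; exists (val H); rewrite ?mem_enum ?valK. Qed.

Definition modal_atoms R :=
  map (Var A) Vs ++ flatten [seq map (Box H) R | H : grp A <- all_grps & val H \subset Ag].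

Fixpoint voc_forms d : seq (form A) :=
  normal_forms (modal_atoms (if d is d'.+1 then voc_forms d' else [::])).

Lemma in_voc2 f g h : {subset vars h <= vars f ++ vars g} -> agts h \subset agts f :|: agts g ->
  in_voc f -> in_voc g -> in_voc h.
Proof.
move=> hv ha [v1 a1] [v2 a2]; split; last by apply: subset_trans ha _; rewrite subUset a1 a2.
by move=> x /hv; rewrite mem_cat => /orP [/v1|/v2].
Qed.

Lemma in_voc_Top : in_voc (Top A).
Proof. by split=> //; exact: sub0set. Qed.

Lemma in_voc_literals gs s : (forall g, List.In g gs -> in_voc g) -> in_voc (literals gs s).
Proof.
elim: gs s => [|g gs IH] [|b s] h /=; try exact: in_voc_Top.
apply: (in_voc2 (f := g) (g := literals gs s)) => //; first by case: b.
- by case: b.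
- exact: h (or_introl erefl).
- exact: IH (fun g' hg' => h g' (or_intror hg')).
Qed.

Lemma in_voc_dnf gs S : (forall g, List.In g gs -> in_voc g) -> in_voc (dnf gs S).
Proof.
move=> h; elim: S => [|s S IH] /=; first by split=> //; exact: sub0set.
exact: in_voc2 (in_voc_literals s h) IH.
Qed.

Lemma modal_atoms_in_voc R f : (forall g, List.In g R -> in_voc g) ->
  List.In f (modal_atoms R) -> in_voc f.
Proof.
move=> hR /in_app_iff [/in_map_iff [x [<- /InP hx]]|].
  by split=> [y|]; rewrite ?inE ?sub0set // => /eqP ->.
case/In_flatten => _ /in_map_iff [H [<- /In_filter [_ hH]]] /in_map_iff [g [<- /hR [hv ha]]].
by split=> //=; rewrite subUset hH ha.
Qed.

Lemma voc_forms_in_voc d f : List.In f (voc_forms d) -> in_voc f.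
Proof.
by elim: d f => [|d IH] f /in_map_iff [m [<- _]]; apply: in_voc_dnf => g; apply: modal_atoms_in_voc.
Qed.

Lemma voc_formsE d :
  voc_forms d = normal_forms (modal_atoms (if d is d'.+1 then voc_forms d' else [::])).
Proof. by case: d. Qed.

Lemma in_voc_cat a b :
  {subset vars a ++ vars b <= Vs} -> agts a :|: agts b \subset Ag -> in_voc a /\ in_voc b.
Proof.
move=> hv; rewrite subUset => /andP [ha hb].
by split; split=> // x hx; apply: hv; rewrite mem_cat hx ?orbT.
Qed.

Lemma voc_bool_combination f d : in_voc f -> depth f <= d ->
  bool_combination (modal_atoms (if d is d'.+1 then voc_forms d' else [::])) f.
Proof.
elim: f d => [x||a IHa b IHb|a IHa b IHb|a IHa b IHb|a IHa|H a IHa] d [hv ha] /= hd.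
- apply: bool_combination_In; apply/in_app_iff; left; apply/in_map_iff; exists x; split=> //.
  by apply/InP; apply: hv; rewrite inE.
- exact: bool_combination_Bot.
- have [h1 h2] := in_voc_cat hv ha.
  by apply: bool_combination_And; [apply: IHa | apply: IHb] => //; lia.
- have [h1 h2] := in_voc_cat hv ha.
  by apply: bool_combination_Or; [apply: IHa | apply: IHb] => //; lia.
- have [h1 h2] := in_voc_cat hv ha.
  by apply: bool_combination_Imp; [apply: IHa | apply: IHb] => //; lia.
- by apply: bool_combination_Neg; apply: IHa.
- case: d hd => // d hd; move: ha; rewrite subUset => /andP [hH ha].
  have [g hg eg] := bool_combination_normal_form (IHa d (conj hv ha) hd).
  apply: (@bool_combination_equiv _ _ _ (Box H g)).
    by move=> M w /=; split=> h v hv'; apply/eg; exact: h.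
  apply: bool_combination_In; apply/in_app_iff; right; apply/In_flatten.
  exists (map (Box H) (voc_forms d)); last by apply/in_map_iff; exists g; rewrite voc_formsE.
  by apply/in_map_iff; exists H; split=> //; apply/In_filter; split=> //; exact: all_grps_In.
Qed.

Lemma voc_normal_form f d : in_voc f -> depth f <= d ->
  exists2 g, List.In g (voc_forms d) & forall M w, sat M w f <-> sat M w g.
Proof.
move=> hf hd; rewrite voc_formsE.
exact: bool_combination_normal_form (voc_bool_combination hf hd).
Qed.

End Vocabulary.

Section UniformInterpolation.
Variables (A : finType) (L : logic).
Implicit Types (alpha beta f : form A) (l : seq (form A)).

Lemma craig_interpolant alpha beta : derivable L [:: alpha] [:: beta] ->
  exists J, [/\ valid L [:: alpha] [:: J], valid L [:: J] [:: beta],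
    in_lang J [:: alpha], in_lang J [:: beta] & depth J <= depth alpha].
Proof.
move=> /derivable_has_interpolant /(_ [:: alpha] [::] [::] [:: beta]) [] // J [v w l m d].
by exists J; split=> //; move: d => /=; lia.
Qed.

Definition conj_all l := foldr (@And A) (Top A) l.

Lemma sat_conj_all (M : model A) w l :
  sat M w (conj_all l) <-> forall f, List.In f l -> sat M w f.
Proof.
elim: l => [|f l IH] /=; first by split=> // _ [].
rewrite IH; split; first by move=> [h1 h2] g [<-|]; auto.
by move=> h; split; auto.
Qed.

Lemma in_voc_conj_all Vs (Ag : {set A}) l :
  (forall f, List.In f l -> in_voc Vs Ag f) -> in_voc Vs Ag (conj_all l).
Proof.
elim: l => [|f l IH] h /=; first exact: in_voc_Top.
exact: in_voc2 (h f (or_introl erefl)) (IH (fun g hg => h g (or_intror hg))).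
Qed.

Lemma in_voc_avoids (V Q : seq nat) (S B : {set A}) f :
  in_voc [seq x <- V | x \notin Q] (S :\: B) f -> avoids Q B f.
Proof.
move=> [hv ha]; split; first by move=> q hq; apply/negP => /hv; rewrite mem_filter hq.
by rewrite disjoints_subset; apply: subset_trans ha _; rewrite setDE; exact: subsetIr.
Qed.

Lemma in_voc_common alpha beta J (Q : seq nat) (B : {set A}) :
  in_lang J [:: alpha] -> in_lang J [:: beta] -> avoids Q B beta ->
  in_voc [seq x <- vars alpha | x \notin Q] (agts alpha :\: B) J.
Proof.
move=> [vJa aJa] [vJb aJb] [hQ hB]; split.
- move=> x hx; move: (vJa x hx) (vJb x hx); rewrite /= !cats0 mem_filter => -> hb.
  by rewrite andbT; apply/negP => /hQ; rewrite hb.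
- apply/subsetP => a ha; move: (subsetP aJa a ha) (subsetP aJb a ha); rewrite /= !setU0 => h1 h2.
  by rewrite inE h1 andbT (disjointFr hB h2).
Qed.

Lemma post_interpolant alpha (Q : seq nat) (B : {set A}) :
  exists I, [/\ avoids Q B I, derivable L [:: alpha] [:: I] &
    forall beta, avoids Q B beta ->
      derivable L [:: alpha] [:: beta] -> derivable L [:: I] [:: beta]].
Proof.
pose Vs := [seq x <- vars alpha | x \notin Q]; pose Ag := agts alpha :\: B.
have [Ls hLs] := exists_filter (fun f => valid L [:: alpha] [:: f])
  (voc_forms Vs Ag (depth alpha)).
exists (conj_all Ls); split.
- apply: (@in_voc_avoids (vars alpha) Q (agts alpha) B); apply: in_voc_conj_all.
  by move=> f /hLs [/voc_forms_in_voc].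
- apply: completeness => M w hM /= [ha _]; left; apply/sat_conj_all => f /hLs [_ hv].
  by case: (hv M w hM (conj ha Logic.I)).
- move=> beta hbeta /craig_interpolant [J [v w la lb d]].
  have [g hg eg] := voc_normal_form (in_voc_common la lb hbeta) d.
  have hgL : List.In g Ls.
    apply/hLs; split=> // M x hM hx; left; apply/eg.
    by case: (v M x hM hx).
  apply: completeness => M x hM /= [hI _].
  have hJx : sat M x J by apply/eg; move/sat_conj_all: hI; apply.
  exact: w M x hM (conj hJx Logic.I).
Qed.

Lemma pre_interpolant alpha (Q : seq nat) (B : {set A}) :
  exists I, [/\ avoids Q B I, derivable L [:: I] [:: alpha] &
    forall beta, avoids Q B beta ->
      derivable L [:: beta] [:: alpha] -> derivable L [:: beta] [:: I]].
Proof.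
have [I [hI /derivable_valid hd hpost]] := post_interpolant (Neg alpha) Q B.
exists (Neg I); split=> //.
- apply: completeness => M w hM /= [hnI _]; left; apply: NNPP => hna; apply: hnI.
  by case: (hd M w hM (conj hna Logic.I)).
- move=> beta hb /derivable_valid hs.
  have /hpost /derivable_valid hI' : derivable L [:: Neg alpha] [:: Neg beta].
    apply: completeness => M w hM /= [hna _]; left => hbt.
    by case: (hs M w hM (conj hbt Logic.I)).
  apply: completeness => M w hM /= [hbt _]; left => hIw.
  by case: (hI' hb M w hM (conj hIw Logic.I)).
Qed.

End UniformInterpolation.

Theorem corollary6p21 (A : finType) (L : logic) (alpha : form A)
    (Q : seq nat) (B : {set A}) :
  0 < #|A| ->
  {subset Q <= vars alpha} ->
  B \subset agts alpha ->
  (exists Ipre : form A,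
      avoids Q B Ipre /\
      derivable L [:: Ipre] [:: alpha] /\
      (forall beta : form A, avoids Q B beta ->
         derivable L [:: beta] [:: alpha] -> derivable L [:: beta] [:: Ipre]))
  /\
  (exists Ipost : form A,
      avoids Q B Ipost /\
      derivable L [:: alpha] [:: Ipost] /\
      (forall beta : form A, avoids Q B beta ->
         derivable L [:: alpha] [:: beta] -> derivable L [:: Ipost] [:: beta])).
Proof.
move=> _ _ _; split.
- by have [I [hI hder huniv]] := pre_interpolant L alpha Q B; exists I.
- by have [I [hI hder huniv]] := post_interpolant L alpha Q B; exists I.
Qed.
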